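(* Let $p$ and $\ell$ be arbitrary positive integers and let $\varepsilon\in(0,1)$. There exist a finite metric space $(\mathcal{X},d)$, an initial forest on it with $\gamma(\mathcal{P})=1$, and a choice of sets $R_i\subseteq P_i$ with $|R_i|=\ell$ for every component, such that the spanning tree returned by $\textsf{MultiRepMFC}(R)$ has weight exactly $$\frac{(2+\ell\varepsilon-\varepsilon)p-1}{(1+\varepsilon\ell)p-\varepsilon}$$ times the weight of an optimal solution of the Metric Forest Completion problem (which for this instance is also a minimum spanning tree of $G_{\mathcal{X}}$).
   Context: For a finite metric space $(\mathcal{X},d)$, $G_{\mathcal{X}}$ is the complete graph on $\mathcal{X}$ with edge weights $d$, and the weight of an edge set is the sum of its edge weights. For $A,B\subseteq\mathcal{X}$, $d(A,B)=\min_{a\in A,b\in B}d(a,b)$. An initial forest consists of a partition $\mathcal{P}=\{P_1,\dots,P_t\}$ of $\mathcal{X}$ and a spanning tree $T_i$ of the complete graph on each $P_i$; $E_t$ is the union of their edge sets. The Metric Forest Completion (MFC) problem: find a minimum-weight spanning tree of $G_{\mathcal{X}}$ containing $E_t$. Overlap parameter: with $\mathcal{T}_{\mathcal{X}}$ the set of minimum spanning trees of $G_{\mathcal{X}}$ and $T(\mathcal{P})$ the edges of $T$ with both endpoints in the same part, $\gamma(\mathcal{P})=w(E_t)/\max_{T\in\mathcal{T}_{\mathcal{X}}}w(T(\mathcal{P}))$. Algorithm $\textsf{MultiRepMFC}(R)$, for nonempty $R_i\subseteq P_i$: for each pair $i\ne j$ set $\hat w(v_i,v_j)=\min\{d(P_i,R_j),d(P_j,R_i)\}$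 and record a point pair attaining it; compute a minimum spanning tree of the complete graph on $v_1,\dots,v_t$ with weights $\hat w$; return $E_t$ together with the recorded point pairs of the edges of this tree. *)

From mathcomp Require Import all_boot all_order all_algebra.
Set Implicit Arguments. Unset Strict Implicit. Unset Printing Implicit Defensive.
Import Order.TTheory GRing.Theory Num.Theory.
Local Open Scope ring_scope.

Section Graphs.
Variable R : realFieldType.
Variable V : finType.

(* Undirected (simple) graphs on V: an edge is a 2-element subset of V. *)
Definition adj (E : {set {set V}}) : rel V :=
  fun x y => (x != y) && ([set x; y] \in E).

(* E is (the edge set of) a spanning tree of the complete graph on S:
   its edges are 2-subsets of S, it connects all of S, and it is acyclic
   (every edge is a bridge: removing it disconnects its endpoints). *)
Definition spanning_tree (S : {set V}) (E : {set {set V}}) : bool :=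
  [&& [forall e in E, (#|e| == 2) && (e \subset S)],
      [forall x in S, forall y in S, connect (adj E) x y] &
      [forall e in E, forall x, forall y,
          (e == [set x; y]) ==> ~~ connect (adj (E :\ e)) x y]].

(* weight of an edge e = {x,y} (x <> y) for a symmetric weight f: f x y *)
Definition ewt (f : V -> V -> R) (e : {set V}) : R :=
  (\sum_(x in e) \sum_(y in e | x != y) f x y) / 2.

Definition wt (f : V -> V -> R) (E : {set {set V}}) : R :=
  \sum_(e in E) ewt f e.

End Graphs.

Section MFC.
Variable R : realFieldType.
Variable X : finType.
Variable d : X -> X -> R.

Definition is_metric : Prop :=
  [/\ forall x y, 0 <= d x y,
      forall x y, d x y = 0 <-> x = y,
      forall x y, d x y = d y x &
      forall x y z, d x z <= d x y + d y z].

Definition is_mst (T : {set {set X}}) : bool :=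
  spanning_tree setT T &&
  [forall T' : {set {set X}}, spanning_tree setT T' ==> (wt d T <= wt d T')].

Definition initial_forest (P : {set {set X}}) (Et : {set {set X}}) : Prop :=
  [/\ partition P [set: X],
      forall B, B \in P -> spanning_tree B [set e in Et | e \subset B] &
      forall e, e \in Et -> exists2 B, B \in P & e \subset B].

Definition Tpart (P : {set {set X}}) (T : {set {set X}}) : {set {set X}} :=
  [set e in T | [exists B in P, e \subset B]].

Definition gamma (P : {set {set X}}) (Et : {set {set X}}) : R :=
  wt d Et / \big[Num.max/0]_(T : {set {set X}} | is_mst T) wt d (Tpart P T).

Definition mfc_opt (Et : {set {set X}}) (T : {set {set X}}) : bool :=
  [&& spanning_tree setT T, Et \subset T &
      [forall T' : {set {set X}},
          (spanning_tree setT T' && (Et \subset T')) ==> (wt d T <= wt d T')]].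

Definition is_setdist (A B : {set X}) (r : R) : Prop :=
  (exists a b, [/\ a \in A, b \in B & d a b = r]) /\
  (forall a b, a \in A -> b \in B -> r <= d a b).

(* F is a possible output of MultiRepMFC(Rep): hw is the weight hat-w on the
   component graph (vertices = parts of P), S a minimum spanning tree of the
   complete graph on the parts w.r.t. hw, pr s the recorded point pair of the
   component edge s, and F = Et together with the recorded pairs of S. *)
Definition multirep_output (P : {set {set X}}) (Et : {set {set X}})
    (Rep : {set X} -> {set X}) (F : {set {set X}}) : Prop :=
  exists (hw : {set X} -> {set X} -> R) (S : {set {set {set X}}})
         (pr : {set {set X}} -> {set X}),
  [/\ forall B C, B \in P -> C \in P -> B != C ->
        exists r1 r2, [/\ is_setdist B (Rep C) r1, is_setdist C (Rep B) r2 &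
                          hw B C = Num.min r1 r2],
      spanning_tree P S /\
        (forall S', spanning_tree P S' -> wt hw S <= wt hw S'),
      forall s, s \in S -> forall B C, B != C -> s = [set B; C] ->
        exists x y, [/\ pr s = [set x; y],
                        (x \in B /\ y \in Rep C) \/ (x \in C /\ y \in Rep B) &
                        d x y = hw B C] &
      F = Et :|: [set pr s | s in S]].

End MFC.

(* The instance is a tree metric.  Component P_i is a path from its gate to its
   center (length 1 - eps) followed by a star of l - 1 leaves at the center
   (length eps each); the gates of P_1, ..., P_(p-1) hang from the gate of P_0,
   the hub, by edges of length w.  A tree with positive edge lengths is a
   minimum spanning tree of its own path metric, because every spanning tree
   must cross the cut below each tree vertex; it contains the initial forest,
   so it is an optimal completion and gamma = 1.  With R_i the l non-gate points
   of P_i, the representative distance between P_i and P_j is the length of the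
   path from the gate of one to the center of the other, so every one of the
   p - 1 component edges chosen by MultiRepMFC costs 1 - eps more than the
   corresponding gate edge of the tree.  Choosing (p - 1) w = (2p - 1) eps turns
   the quotient of the two weights into the stated ratio. *)

From mathcomp Require Import all_boot all_order all_algebra.
From mathcomp.algebra_tactics Require Import ring lra.
From mathcomp.zify Require Import zify.
Import Order.TTheory GRing.Theory Num.Theory.
Local Open Scope ring_scope.
Set Implicit Arguments. Unset Strict Implicit. Unset Printing Implicit Defensive.

(** * Edge sets and their weights *)

Section EdgeSets.
Variable V : finType.
Implicit Types (E : {set {set V}}) (K : {set V}).

Lemma adj_sym E : symmetric (adj E).
Proof. by move=> x y; rewrite /adj eq_sym setUC. Qed.

Lemma set2_eq (a b c d : V) : [set a; b] = [set c; d] ->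
  (a = c /\ b = d) \/ (a = d /\ b = c).
Proof.
move=> e.
have : a \in [set c; d] by rewrite -e set21.
have : b \in [set c; d] by rewrite -e set22.
have : c \in [set a; b] by rewrite e set21.
have : d \in [set a; b] by rewrite e set22.
by rewrite !inE; do 4 case/orP=> /eqP ?; subst; auto.
Qed.

Lemma connect_cut_edge E K x y :
  connect (adj E) x y -> x \in K -> y \notin K ->
  exists u v, [/\ u \in K, v \notin K, u != v & [set u; v] \in E].
Proof.
move=> cxy xK yK.
have [/existsP[u /existsP[v /and4P[uK vK uv uvE]]]|nocut] :=
  boolP [exists u, exists v, [&& u \in K, v \notin K, u != v & [set u; v] \in E]].
  by exists u, v.
have clK : closed (adj E) K.
  apply: (intro_closed (sym_connect_sym (adj_sym E))) => a b /andP[ab abE] aK.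
  apply: contraNT nocut => bK.
  by apply/existsP; exists a; apply/existsP; exists b; rewrite aK bK ab abE.
by move: (closed_connect clK cxy); rewrite xK (negbTE yK).
Qed.

Lemma bridges_of_cuts E :
  (forall e, e \in E -> forall x y, e = [set x; y] ->
     exists K, (x \in K) != (y \in K) /\
       forall a b, a != b -> [set a; b] \in E -> [set a; b] != e ->
         (a \in K) = (b \in K)) ->
  [forall e in E, forall x, forall y,
      (e == [set x; y]) ==> ~~ connect (adj (E :\ e)) x y].
Proof.
move=> cuts; apply/forall_inP => e eE; apply/forallP => x; apply/forallP => y.
apply/implyP => /eqP exy; have [K [xyK clK]] := cuts e eE x y exy.
apply: contra xyK => cxy; apply/eqP.
apply: closed_connect cxy.
by move=> a b /andP[ab]; rewrite !inE => /andP[ne abE]; apply: clK.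
Qed.

Lemma spanning_tree_card (P : {set V}) E : spanning_tree P E -> (#|P| <= #|E|.+1)%N.
Proof.
case/and3P=> _ /forall_inP conn _.
case: (posnP #|P|) => [->//|/card_gt0P[r rP]].
have grow k : (k < #|P|)%N -> exists (U : {set V}) (F : {set {set V}}),
    [/\ r \in U, #|U| = k.+1, F \subset E, #|F| = k & forall e, e \in F -> e \subset U].
  elim: k => [|k IH] ltkP.
    exists [set r], set0; rewrite set11 cards1 sub0set cards0.
    by split=> // e; rewrite inE.
  have [U [F [rU cU FE cF FU]]] := IH (ltnW ltkP).
  have /subsetPn[y yP yU] : ~~ (P \subset U).
    by apply/negP => /subset_leq_card; rewrite cU; lia.
  have [u [v [uU vU uv uvE]]] :=
    connect_cut_edge (forall_inP (conn r rP) y yP) rU yU.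
  have uvF : [set u; v] \notin F.
    by apply: contra vU => /FU /subsetP; apply; rewrite set22.
  exists (v |: U), ([set u; v] |: F); split.
  - by rewrite !inE rU orbT.
  - by rewrite cardsU1 vU cU.
  - by rewrite subUset sub1set uvE FE.
  - by rewrite cardsU1 uvF cF.
  - move=> e; rewrite !inE => /orP[/eqP->|/FU eU]; last exact: subset_trans eU (subsetUr _ _).
    by apply/subsetP => z /set2P[->|->]; rewrite !inE ?uU ?eqxx ?orbT.
have [|U [F [_ _ FE cF _]]] := grow #|P|.-1.
  by rewrite ltn_predL; apply/card_gt0P; exists r.
by have := subset_leq_card FE; rewrite cF; lia.
Qed.

End EdgeSets.

Section Weights.
Variables (R : realFieldType) (V : finType).
Implicit Types (f : V -> V -> R) (E : {set {set V}}).

Lemma ewt_set2 f x y : x != y -> ewt f [set x; y] = (f x y + f y x) / 2.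
Proof.
move=> xy; rewrite /ewt.
have inner a : \sum_(b in [set x; y] | a != b) f a b =
    (if a != x then f a x else 0) + (if a != y then f a y else 0).
  by rewrite big_mkcondr /= (@big_setU1 _ _ _ _ x [set y]) ?inE //= big_set1.
rewrite (@big_setU1 _ _ _ _ x [set y]) ?inE //= big_set1 !inner.
by rewrite eqxx (negbTE xy) eq_sym (negbTE xy) eqxx !addr0 add0r.
Qed.

Lemma ewt_sym_set2 f x y : x != y -> (forall a b, f a b = f b a) ->
  ewt f [set x; y] = f x y.
Proof. by move=> xy fsym; rewrite ewt_set2 // [f y x]fsym; lra. Qed.

Lemma ewt_ge0 f e : (forall x y, 0 <= f x y) -> 0 <= ewt f e.
Proof. by move=> f0; rewrite divr_ge0 // sumr_ge0 // => x _; apply: sumr_ge0. Qed.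

Lemma wt_ge0 f E : (forall x y, 0 <= f x y) -> 0 <= wt f E.
Proof. by move=> f0; rewrite sumr_ge0 // => e _; apply: ewt_ge0. Qed.

Lemma wt_setD f E1 E2 : E1 \subset E2 -> wt f E2 = wt f E1 + wt f (E2 :\: E1).
Proof. by move=> sE; rewrite /wt (big_setID E1) /= (setIidPr sE). Qed.

Lemma wt_le_subset f E1 E2 : (forall x y, 0 <= f x y) ->
  E1 \subset E2 -> wt f E1 <= wt f E2.
Proof. by move=> f0 /(wt_setD f) ->; rewrite lerDl wt_ge0. Qed.

Lemma wt_setU f E1 E2 : [disjoint E1 & E2] -> wt f (E1 :|: E2) = wt f E1 + wt f E2.
Proof. by move=> dE; rewrite /wt -bigU //; apply: eq_bigl => e; rewrite !inE. Qed.

Lemma wt_setU_imset (W : finType) f (h : W -> W -> R) E (S : {set {set W}})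
    (pr : {set W} -> {set V}) :
  {in S &, injective pr} -> [disjoint E & pr @: S] ->
  {in S, forall s, ewt f (pr s) = ewt h s} ->
  wt f (E :|: pr @: S) = wt f E + wt h S.
Proof.
move=> pr_inj dE prw; rewrite wt_setU // /wt big_imset //=.
by congr (_ + _); apply: eq_bigr.
Qed.

Section LinearCombination.
Variables (W : finType) (lam : W -> R) (g : W -> V -> V -> R).

Lemma ewt_sum e :
  ewt (fun x y => \sum_v lam v * g v x y) e = \sum_v lam v * ewt (g v) e.
Proof.
rewrite /ewt; under eq_bigr => x _ do rewrite exchange_big /=.
rewrite exchange_big /= mulr_suml; apply: eq_bigr => v _.
rewrite mulrA; congr (_ / 2); rewrite mulr_sumr; apply: eq_bigr => x _.
by rewrite mulr_sumr.
Qed.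

Lemma wt_sum E :
  wt (fun x y => \sum_v lam v * g v x y) E = \sum_v lam v * wt (g v) E.
Proof.
rewrite /wt; under eq_bigr => e _ do rewrite ewt_sum.
by rewrite exchange_big; apply: eq_bigr => v _; rewrite mulr_sumr.
Qed.

End LinearCombination.

Lemma sum_le_wt_of_cuts (W : finType) (lam : W -> R) (s : W -> V -> V -> bool)
    (A : pred W) E :
  (forall v, 0 <= lam v) -> (forall v x y, s v x y = s v y x) ->
  (forall v, A v -> exists x y, [/\ x != y, [set x; y] \in E & s v x y]) ->
  \sum_(v | A v) lam v <= wt (fun x y => \sum_v lam v * (s v x y)%:R) E.
Proof.
move=> lam0 ssym cuts; rewrite wt_sum big_mkcond /=; apply: ler_sum => v _.
case: ifP => Av; last by rewrite mulr_ge0 // wt_ge0.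
have [x [y [xy xyE sxy]]] := cuts v Av.
pose g x y : R := (s v x y)%:R.
have g1 : wt g [set [set x; y]] = 1.
  by rewrite /wt big_set1 ewt_sym_set2 /g ?sxy // => a b; rewrite ssym.
suff : 1 <= wt g E by move=> w1; rewrite ler_peMr.
rewrite -g1; apply: wt_le_subset => [a b|]; first exact: ler0n.
by rewrite sub1set.
Qed.

End Weights.

(** * Tree metrics *)

Section TreeMetric.
Variables (R : realFieldType) (V : finType).
Variables (root : V) (par : V -> V) (rank : V -> nat) (lam : V -> R).
Hypothesis par_root : par root = root.
Hypothesis rank_par : forall v, v != root -> (rank (par v) < rank v)%N.
Hypothesis lam_root : lam root = 0.
Hypothesis lam_gt0 : forall v, v != root -> 0 < lam v.

(* The tree path between [x] and
   [y] uses the edge from [v] to [par v] exactly when [v] separates them, so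
   [tree_dist] is the path metric of the tree with edge lengths [lam]. *)
Definition subtree v : {set V} := [set x | fconnect par x v].
Definition separates v x y := (x \in subtree v) != (y \in subtree v).
Definition tree_dist x y : R := \sum_v lam v * (separates v x y)%:R.
Definition tree_edge v : {set V} := [set v; par v].
Definition tree_edges (A : {set V}) : {set {set V}} := tree_edge @: A.

Lemma lam_ge0 v : 0 <= lam v.
Proof. by have [->|/lam_gt0/ltW//] := eqVneq v root; rewrite lam_root. Qed.

Lemma rank_par_le v : (rank (par v) <= rank v)%N.
Proof. by have [->|/rank_par/ltnW//] := eqVneq v root; rewrite par_root. Qed.

Lemma fconnect_stable (a : pred V) x y :
  (forall z, a z -> a (par z)) -> a x -> fconnect par x y -> a y.
Proof. by move=> aS ax /iter_findex <-; elim: findex => //= k IH; apply: aS. Qed.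

Lemma fconnect_root x : fconnect par x root.
Proof.
move: (leqnn (rank x)); move: {2}(rank x) => n.
elim: n x => [|n IH] x rx; have [->|xr] := eqVneq x root; rewrite ?connect0 //.
  by have := rank_par xr; lia.
by apply: connect_trans (fconnect1 par x) (IH _ _); have := rank_par xr; lia.
Qed.

Lemma fconnect_rootE y : fconnect par root y = (y == root).
Proof.
apply/idP/idP => [|/eqP->]; last exact: connect0.
apply: (fconnect_stable (a := pred1 root)) => [z /eqP->|]; last exact: eqxx.
by rewrite /= par_root.
Qed.

Lemma mem_subtreeE v x : (x \in subtree v) = (x == v) || (par x \in subtree v).
Proof.
rewrite !inE; apply/idP/orP => [/iter_findex|[/eqP->|]].
- case: findex => [<-|k]; first by left.
  by rewrite iterSr => <-; right; apply: fconnect_iter.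
- exact: connect0.
- exact: connect_trans (fconnect1 par x).
Qed.

Lemma subtree_rank v x : x \in subtree v -> (rank v <= rank x)%N.
Proof.
rewrite inE; apply: (fconnect_stable (a := fun z => rank z <= rank x)%N) => //.
by move=> z; apply: leq_trans (rank_par_le z).
Qed.

Lemma subtree_rank_lt v x : x \in subtree v -> x != v -> (rank v < rank x)%N.
Proof.
have [->|xr] := eqVneq x root.
  by rewrite inE fconnect_rootE eq_sym => ->.
rewrite mem_subtreeE => /orP[->//|/subtree_rank rvp] _.
by have := rank_par xr; lia.
Qed.

Lemma separates_sym v x y : separates v x y = separates v y x.
Proof. by rewrite /separates eq_sym. Qed.

Lemma separates_edge u v : separates u v (par v) = (u == v) && (v != root).
Proof.
rewrite /separates mem_subtreeE eq_sym.
have [<-|_] := eqVneq u v; last by rewrite /= eqxx.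
have [->|ur] := eqVneq u root; first by rewrite par_root inE connect0.
suff /negbTE-> : par u \notin subtree u by [].
by apply/negP => /subtree_rank; have := rank_par ur; lia.
Qed.

Lemma tree_dist_sym x y : tree_dist x y = tree_dist y x.
Proof. by apply: eq_bigr => v _; rewrite separates_sym. Qed.

Lemma tree_dist_xx x : tree_dist x x = 0.
Proof. by rewrite /tree_dist big1 // => v _; rewrite /separates eqxx mulr0. Qed.

Lemma tree_dist_triangle x y z : tree_dist x z <= tree_dist x y + tree_dist y z.
Proof.
rewrite /tree_dist -big_split /=; apply: ler_sum => v _.
rewrite -mulrDr ler_wpM2l ?lam_ge0 // -natrD ler_nat /separates.
by case: (x \in _); case: (y \in _); case: (z \in _).
Qed.

Lemma sum_le_tree_dist (U : seq V) x y : uniq U ->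
  (forall u, u \in U -> u != root -> separates u x y) ->
  \sum_(u <- U) lam u <= tree_dist x y.
Proof.
move=> Uu Usep.
have -> : \sum_(u <- U) lam u = \sum_(u <- U) lam u * (separates u x y)%:R.
  apply: eq_big_seq => u uU; have [->|ur] := eqVneq u root.
    by rewrite lam_root mul0r.
  by rewrite Usep ?mulr1.
rewrite big_uniq // [leRHS](bigID (mem U)) /= lerDl sumr_ge0 // => v _.
by rewrite mulr_ge0 ?lam_ge0.
Qed.

Lemma tree_dist_gt0 x y : x != y -> 0 < tree_dist x y.
Proof.
move=> xy.
suff [v [vr sv]] : exists v, v != root /\ separates v x y.
  apply: lt_le_trans (lam_gt0 vr) _.
  have := @sum_le_tree_dist [:: v] x y isT; rewrite big_seq1; apply.
  by move=> u; rewrite inE => /eqP->.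
have nonroot v z : z \notin subtree v -> v != root.
  by apply: contraNneq => ->; rewrite inE fconnect_root.
have own v : v \in subtree v by rewrite inE connect0.
have [xy_sub|xy_nsub] := boolP (x \in subtree y); last first.
  by exists y; rewrite /separates own (negbTE xy_nsub) (nonroot _ _ xy_nsub).
have [yx_sub|yx_nsub] := boolP (y \in subtree x); last first.
  by exists x; rewrite /separates own (negbTE yx_nsub) (nonroot _ _ yx_nsub).
have := subtree_rank_lt xy_sub xy; have := subtree_rank_lt yx_sub.
by rewrite eq_sym xy => /(_ isT); lia.
Qed.

Lemma tree_dist_metric : is_metric tree_dist.
Proof.
split; [| | exact: tree_dist_sym | exact: tree_dist_triangle].
  by move=> x y; rewrite sumr_ge0 // => v _; rewrite mulr_ge0 ?lam_ge0.
move=> x y; split=> [|->]; last exact: tree_dist_xx.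
by move=> d0; apply/eqP/negPn/negP => /tree_dist_gt0; rewrite d0 ltxx.
Qed.

Lemma tree_dist_edge v : tree_dist v (par v) = lam v.
Proof.
have [->|vr] := eqVneq v root; first by rewrite par_root tree_dist_xx lam_root.
rewrite /tree_dist (bigD1 v) //= separates_edge eqxx vr mulr1 big1 ?addr0 //.
by move=> u uv; rewrite separates_edge (negbTE uv) mulr0.
Qed.

Lemma separates_tree_edge u v x y : v != root -> tree_edge v = [set x; y] ->
  separates u x y = (u == v).
Proof.
move=> vr /set2_eq[[<- <-]|[<- <-]]; last rewrite separates_sym;
  by rewrite separates_edge vr andbT.
Qed.

Lemma par_neq v : v != root -> v != par v.
Proof.
move=> vr; have : separates v v (par v) by rewrite separates_edge eqxx.
by apply: contraTneq => <-; rewrite /separates eqxx.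
Qed.

Lemma tree_edge_inj : {in [set~ root] &, injective tree_edge}.
Proof.
move=> u v; rewrite !inE => ur vr uv; apply/eqP.
by rewrite -(separates_tree_edge u vr (esym uv)) separates_edge eqxx.
Qed.

Lemma ewt_tree_edge v : v != root -> ewt tree_dist (tree_edge v) = lam v.
Proof.
by move=> vr; rewrite ewt_sym_set2 ?par_neq ?tree_dist_edge //; apply: tree_dist_sym.
Qed.

Lemma wt_tree_edges (A : {set V}) : A \subset [set~ root] ->
  wt tree_dist (tree_edges A) = \sum_(v in A) lam v.
Proof.
move=> /subsetP sA; rewrite /wt big_imset; last first.
  by move=> u v /sA + /sA; apply: tree_edge_inj.
by apply: eq_bigr => v /sA; rewrite !inE; apply: ewt_tree_edge.
Qed.

Lemma tree_edge_card v : v != root -> #|tree_edge v| == 2.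
Proof. by move=> vr; rewrite cards2 par_neq. Qed.

Lemma bridges_of_tree_edges (E : {set {set V}}) : E \subset tree_edges [set~ root] ->
  [forall e in E, forall x, forall y,
      (e == [set x; y]) ==> ~~ connect (adj (E :\ e)) x y].
Proof.
move=> /subsetP sE; apply: bridges_of_cuts => e eE x y exy.
have /imsetP[v vr ev] := sE e eE; rewrite !inE in vr; rewrite ev in exy.
exists (subtree v); split.
  by rewrite -/(separates v x y) (separates_tree_edge _ vr exy).
move=> a b ab /sE /imsetP[u ur eab] ne; rewrite !inE in ur.
apply/eqP; rewrite -[_ == _]negbK -/(separates v a b).
rewrite (separates_tree_edge _ ur (esym eab)).
by apply: contraNN ne => /eqP uv; rewrite eab -uv ev.
Qed.

Lemma connect_par (E : {set {set V}}) v :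
  (v != root -> tree_edge v \in E) -> connect (adj E) v (par v).
Proof.
have [->|vr Ev] := eqVneq v root; first by rewrite par_root connect0.
by apply: connect1; rewrite /adj par_neq // Ev.
Qed.

Lemma tree_spanning : spanning_tree setT (tree_edges [set~ root]).
Proof.
have to_root x : connect (adj (tree_edges [set~ root])) x root.
  apply: (fconnect_stable (a := connect (adj _) x)) (connect0 _ _) (fconnect_root x).
  move=> z xz; apply: connect_trans xz (connect_par _) => zr.
  by apply: imset_f; rewrite !inE.
apply/and3P; split; last exact: bridges_of_tree_edges.
  apply/forall_inP => _ /imsetP[v vr ->]; rewrite subsetT andbT tree_edge_card //.
  by rewrite !inE in vr.
apply/forall_inP => x _; apply/forall_inP => y _; apply: connect_trans (to_root x) _.
by rewrite (sym_connect_sym (adj_sym _)) to_root.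
Qed.

Lemma spanning_tree_separates (T : {set {set V}}) v :
  spanning_tree setT T -> v != root ->
  exists a b, [/\ a != b, [set a; b] \in T & separates v a b].
Proof.
case/and3P=> _ /forall_inP/(_ v (in_setT v))/forall_inP c _ vr.
have {}c := c root (in_setT root).
have vK : v \in subtree v by rewrite inE connect0.
have rK : root \notin subtree v by rewrite inE fconnect_rootE.
have [a [b [aK bK ab abT]]] := connect_cut_edge c vK rK.
by exists a, b; rewrite /separates aK (negbTE bK).
Qed.

Lemma sum_lam_le_wt (P : pred V) (E : {set {set V}}) :
  (forall v, P v -> v != root ->
     exists a b, [/\ a != b, [set a; b] \in E & separates v a b]) ->
  \sum_(v | P v) lam v <= wt tree_dist E.
Proof.
move=> cuts; rewrite (bigID (pred1 root)) /= big1 ?add0r => [|v /andP[_ /eqP->]//].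
apply: sum_le_wt_of_cuts => [v|v x y|v /andP[Pv vr]]; first exact: lam_ge0.
  exact: separates_sym.
exact: cuts.
Qed.

Lemma tree_is_mst : is_mst tree_dist (tree_edges [set~ root]).
Proof.
rewrite /is_mst tree_spanning; apply/forallP => T; apply/implyP => sT.
rewrite wt_tree_edges //; apply: sum_lam_le_wt => v _.
exact: spanning_tree_separates.
Qed.

End TreeMetric.

Section Completion.
Variables (R : realFieldType) (X : finType) (d : X -> X -> R).

Lemma is_setdist_uniq (A B : {set X}) r r' :
  is_setdist d A B r -> is_setdist d A B r' -> r = r'.
Proof.
move=> [[a [b [aA bB <-]]] le_r] [[a' [b' [aA' bB' <-]]] le_r'].
by apply: le_anti; rewrite le_r // le_r'.
Qed.

Lemma mst_mfc_opt (Et T : {set {set X}}) :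
  is_mst d T -> Et \subset T -> mfc_opt d Et T.
Proof.
case/andP=> sT /forallP Tmin EtT; rewrite /mfc_opt sT EtT /=.
by apply/forallP => T'; apply/implyP => /andP[sT' _]; apply: (implyP (Tmin T')).
Qed.

Lemma gamma_eq1 (P Et T0 : {set {set X}}) : 0 < wt d Et -> is_mst d T0 ->
  wt d Et <= wt d (Tpart P T0) ->
  (forall T, is_mst d T -> wt d (Tpart P T) <= wt d Et) ->
  gamma d P Et = 1.
Proof.
move=> Et_gt0 mstT0 Et_le T_le.
rewrite /gamma; suff -> : \big[Num.max/0]_(T | is_mst d T) wt d (Tpart P T) = wt d Et.
  by rewrite divff // gt_eqF.
apply/eqP; rewrite eq_le (le_trans Et_le (le_bigmax_cond _ _ mstT0)) andbT.
by apply: bigmax_le => [|T /T_le//]; apply: ltW.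
Qed.

End Completion.

(** * The tight instance *)

Section TightInstance.
Variables (R : realFieldType) (n m : nat) (w L ec : R).
Hypotheses (w_gt0 : 0 < w) (L_gt0 : 0 < L) (ec_gt0 : 0 < ec).

(* Point (i, c) is slot c of component i: slot 0 is the gate, slot 1 the
   center and the other slots are leaves.  The gate of component 0 is the hub;
   the other gates hang from it with length w, each center from its gate with
   length L, and each leaf from its center with length ec. *)
Local Notation point := ('I_n.+1 * 'I_m.+2)%type.

Definition hub : point := (ord0, ord0).
Definition gate i : point := (i, ord0).
Definition center i : point := (i, lift ord0 ord0).

Definition parent (x : point) : point :=
  if x.2 == 0 :> nat then hub else if x.2 == 1 :> nat then gate x.1 else center x.1.

Definition height (x : point) : nat := (x.1 != ord0) + minn x.2 2.

Definition edge_len (x : point) : R :=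
  if x.2 == 0 :> nat then (if x.1 == ord0 then 0 else w)
  else if x.2 == 1 :> nat then L else ec.

Lemma parent_hub : parent hub = hub. Proof. by []. Qed.

Lemma height_parent x : x != hub -> (height (parent x) < height x)%N.
Proof. by case: x => [[[|i] ?] [[|[|c]] ?]]. Qed.

Lemma edge_len_hub : edge_len hub = 0. Proof. by []. Qed.

Lemma edge_len_gt0 x : x != hub -> 0 < edge_len x.
Proof. by case: x => [[[|i] ?] [[|[|c]] ?]]. Qed.

Local Notation d := (tree_dist parent edge_len).
Local Notation subtree := (subtree parent).
Local Notation separates := (separates parent).
Local Notation tree_edges := (tree_edges parent).

Lemma dist_metric : is_metric d.
Proof. exact: tree_dist_metric parent_hub height_parent edge_len_hub edge_len_gt0. Qed.

Lemma gate_ancestor (x : point) : x \in subtree (gate x.1).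
Proof.
rewrite inE; case: x => [i [[|[|c]] hc]].
- by rewrite (_ : Ordinal hc = ord0) ?connect0 //; apply: val_inj.
- exact: fconnect1.
- exact: connect_trans (fconnect1 _ _) (fconnect1 _ _).
Qed.

Lemma center_ancestor (x : point) : x.2 != ord0 -> x \in subtree (center x.1).
Proof.
rewrite inE; case: x => [i [[|[|c]] hc]] //= _.
- by rewrite (_ : Ordinal hc = lift ord0 ord0) ?connect0 //; apply: val_inj.
- exact: fconnect1.
Qed.

Lemma ancestor_component u (x : point) : u != hub -> x \in subtree u -> u.1 = x.1.
Proof.
move=> uh; rewrite inE => xu.
have : (u == hub) || (u.1 == x.1).
  apply: (fconnect_stable (a := fun z : point => (z == hub) || (z.1 == x.1))) xu;
    last by rewrite eqxx orbT.
  move=> z /orP[/eqP->|/eqP zx]; first by rewrite parent_hub eqxx.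
  by rewrite /parent; do 2 case: ifP => _ //=; rewrite zx eqxx orbT.
by rewrite (negbTE uh) => /eqP.
Qed.

Lemma gate_neq_hub i : i != ord0 -> gate i != hub.
Proof. by move=> i0; apply: contraNneq i0 => -[->]. Qed.

Lemma mem_subtree_gate i (x : point) : i != ord0 -> (x \in subtree (gate i)) = (x.1 == i).
Proof.
move=> i0; apply/idP/eqP => [/(ancestor_component (gate_neq_hub i0))//|<-].
exact: gate_ancestor.
Qed.

Lemma separates_component u (x y : point) :
  u != hub -> x \in subtree u -> u.1 != y.1 -> separates u x y.
Proof.
move=> uh xu; rewrite /separates xu; apply: contra.
by move=> /eqP/esym/(ancestor_component uh)->.
Qed.

Lemma gate_neq_center i j : gate i != center j.
Proof. by apply/eqP => -[_ /eqP]. Qed.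

Lemma cross_dist_ge (a b : point) : a.1 != b.1 -> b.2 != ord0 ->
  edge_len (gate a.1) + edge_len (gate b.1) + L <= d a b.
Proof.
move=> ab b2.
have := sum_le_tree_dist edge_len_hub edge_len_gt0
  (U := [:: gate a.1; gate b.1; center b.1]) (x := a) (y := b).
rewrite !big_cons big_nil addr0 addrA; apply.
  by rewrite /= !inE !negb_or !gate_neq_center /= ab.
move=> u; rewrite !inE => /or3P[] /eqP-> uh.
- exact: separates_component uh (gate_ancestor a) ab.
- by rewrite separates_sym; apply: separates_component uh (gate_ancestor b) _; rewrite eq_sym.
- by rewrite separates_sym; apply: separates_component uh (center_ancestor b2) _; rewrite eq_sym.
Qed.

Lemma cross_dist i j : i != j ->
  d (gate i) (center j) = edge_len (gate i) + edge_len (gate j) + L.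
Proof.
move=> ij; apply: le_anti; apply/andP; split; last first.
  exact: (cross_dist_ge (a := gate i) (b := center j)).
have [_ _ dsym dtri] := dist_metric.
have dpar v : d v (parent v) = edge_len v.
  exact: (tree_dist_edge parent_hub height_parent edge_len_hub).
apply: le_trans (dtri _ hub _) _; apply: le_trans (lerD (lexx _) (dtri hub (gate j) _)) _.
by rewrite addrA (dpar (gate i)) dsym (dpar (gate j)) dsym (dpar (center j)).
Qed.

Definition part i : {set point} := [set x | x.1 == i].
Definition blocks : {set {set point}} := [set part i | i : 'I_n.+1].
Definition inner : {set point} := [set x | x.2 != ord0].
Definition inner_edges : {set {set point}} := tree_edges inner.
Definition reps (B : {set point}) : {set point} := [set x in B | x.2 != ord0].
Definition block_edges i : {set {set point}} := [set e in inner_edges | e \subset part i].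

Lemma part_inj : injective part.
Proof.
move=> i j eij; have : gate i \in part j by rewrite -eij inE.
by rewrite inE => /eqP.
Qed.

Lemma part_in_blocks i : part i \in blocks.
Proof. exact: imset_f. Qed.

Lemma blocks_partition : partition blocks [set: point].
Proof.
apply/and3P; split.
- apply/eqP/setP => x; rewrite inE; apply/bigcupP.
  by exists (part x.1); rewrite ?part_in_blocks ?inE.
- apply/trivIsetP => _ _ /imsetP[i _ ->] /imsetP[j _ ->] ij.
  rewrite -setI_eq0; apply/eqP/setP => x; rewrite !inE.
  by apply: contraNF ij => /andP[/eqP <- /eqP <-].
- by apply/imsetP => -[i _ /setP/(_ (gate i))]; rewrite !inE eqxx.
Qed.

Lemma inner_nonroot : inner \subset [set~ hub].
Proof. by apply/subsetP => -[i c]; rewrite !inE; apply: contraNneq => -[_ ->]. Qed.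

Lemma inner_edge_sub x : x \in inner -> tree_edge parent x \subset part x.1.
Proof.
case: x => [i [[|[|c]] ?]]; rewrite inE // => _;
  by apply/subsetP => z /set2P[->|->]; rewrite inE.
Qed.

Lemma block_edge x : x \in inner -> tree_edge parent x \in block_edges x.1.
Proof. by move=> xI; rewrite inE inner_edge_sub ?imset_f. Qed.

Lemma block_connect_gate x : connect (adj (block_edges x.1)) x (gate x.1).
Proof.
have step (y : point) : y \in inner -> connect (adj (block_edges y.1)) y (parent y).
  by move=> yI; apply: (connect_par parent_hub height_parent) => _; apply: block_edge.
case: x => [i [[|[|c]] hc]].
- rewrite (_ : Ordinal hc = ord0); last exact: val_inj.
  exact: connect0.
- by apply: step; rewrite inE.
- apply: (connect_trans (y := center i)); first by apply: step; rewrite inE.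
  by apply: (step (center i)); rewrite inE.
Qed.

Lemma block_spanning i : spanning_tree (part i) (block_edges i).
Proof.
apply/and3P; split.
- apply/forall_inP => e; rewrite inE => /andP[/imsetP[x xI ->] ->].
  by rewrite (tree_edge_card parent_hub height_parent) // -in_setC1 (subsetP inner_nonroot).
- apply/forall_inP => x; rewrite inE => /eqP xi; apply/forall_inP => y; rewrite inE => /eqP yi.
  have := block_connect_gate x; have := block_connect_gate y; rewrite xi yi => cy cx.
  by apply: connect_trans cx _; rewrite (sym_connect_sym (adj_sym _)).
- apply: bridges_of_tree_edges parent_hub height_parent _ _.
  apply/subsetP => e; rewrite inE => /andP[eI _].
  exact: subsetP (imsetS _ inner_nonroot) e eI.
Qed.

Lemma inner_forest : initial_forest blocks inner_edges.
Proof.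
split; [exact: blocks_partition | by move=> _ /imsetP[i _ ->]; apply: block_spanning |].
move=> _ /imsetP[x xI ->]; exists (part x.1); first exact: part_in_blocks.
exact: inner_edge_sub.
Qed.

Lemma sum_slots (P : pred 'I_m.+2) :
  \sum_(x : point | P x.2) edge_len x = \sum_i \sum_(c | P c) edge_len (i, c).
Proof. by rewrite pair_big_dep. Qed.

Lemma sum_gates : \sum_(x : point | x.2 == ord0) edge_len x = n%:R * w.
Proof.
rewrite (sum_slots (fun c => c == ord0)).
rewrite (eq_bigr (fun i => edge_len (gate i))) => [|i _]; last by rewrite (big_pred1 ord0).
rewrite big_ord_recl add0r (eq_bigr (fun _ => w)) // sumr_const card_ord.
by rewrite mulr_natl.
Qed.

Lemma sum_inner : \sum_(x in inner) edge_len x = n.+1%:R * (L + m%:R * ec).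
Proof.
rewrite (eq_bigl (fun x : point => x.2 != ord0)) => [|x]; last by rewrite inE.
rewrite (sum_slots (fun c => c != ord0)) (eq_bigr (fun _ => L + m%:R * ec)) => [|i _].
  by rewrite sumr_const card_ord [RHS]mulr_natl.
rewrite big_mkcond big_ord_recl /= add0r big_ord_recl /=; congr (_ + _).
by rewrite (eq_bigr (fun _ => ec)) // sumr_const card_ord mulr_natl.
Qed.

Lemma sum_nonhub :
  \sum_(x in [set~ hub]) edge_len x = n%:R * w + \sum_(x in inner) edge_len x.
Proof.
have -> : \sum_(x in [set~ hub]) edge_len x = \sum_x edge_len x.
  by rewrite [RHS](bigD1 hub) //= edge_len_hub add0r; apply: eq_bigl => x; rewrite !inE.
rewrite (bigID (fun x : point => x.2 == ord0)) /= sum_gates; congr (_ + _).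
by apply: eq_bigl => x; rewrite inE.
Qed.

Definition hub_tree : {set {set point}} := tree_edges [set~ hub].

Lemma hub_tree_mst : is_mst d hub_tree.
Proof. exact: tree_is_mst parent_hub height_parent edge_len_hub edge_len_gt0. Qed.

Lemma inner_edges_sub : inner_edges \subset hub_tree.
Proof. exact: imsetS inner_nonroot. Qed.

Lemma wt_inner_edges : wt d inner_edges = n.+1%:R * (L + m%:R * ec).
Proof.
by rewrite (wt_tree_edges parent_hub height_parent edge_len_hub inner_nonroot) sum_inner.
Qed.

Lemma wt_hub_tree : wt d hub_tree = n%:R * w + wt d inner_edges.
Proof.
rewrite (wt_tree_edges parent_hub height_parent edge_len_hub (subxx _)) sum_nonhub.
by rewrite (wt_tree_edges parent_hub height_parent edge_len_hub inner_nonroot).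
Qed.

Lemma mst_part_le T : is_mst d T -> wt d (Tpart blocks T) <= wt d inner_edges.
Proof.
case/andP=> sT /forallP/(_ hub_tree)/implyP.
rewrite (tree_spanning parent_hub height_parent) => /(_ isT) T_le.
(* Below the gate of a component i != ord0 lies exactly that component, so the
   edge of T crossing this cut joins two different blocks. *)
have cross : n%:R * w <= wt d (T :\: Tpart blocks T).
  rewrite -sum_gates; apply: (sum_lam_le_wt edge_len_hub edge_len_gt0) => v /eqP v2 vh.
  have vg : v = gate v.1 by case: v v2 {vh} => i c /= ->.
  have v1 : v.1 != ord0 by apply: contraNneq vh => v1; rewrite vg v1.
  have [a [b [ab abT sep]]] := spanning_tree_separates parent_hub sT vh.
  exists a, b; split=> //; rewrite !inE abT andbT.
  apply/existsP => -[_ /andP[/imsetP[k _ ->]] /subsetP sub].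
  move: sep; rewrite vg /separates !mem_subtree_gate //.
  have := sub a (set21 _ _); have := sub b (set22 _ _).
  by rewrite !inE => /eqP-> /eqP->; rewrite eqxx.
have sub : Tpart blocks T \subset T by apply/subsetP => e; rewrite inE => /andP[].
by move: T_le; rewrite (wt_setD d sub) wt_hub_tree; lra.
Qed.

Lemma gamma_blocks : gamma d blocks inner_edges = 1.
Proof.
apply: (gamma_eq1 _ hub_tree_mst _ mst_part_le).
  by rewrite wt_inner_edges mulr_gt0 ?ltr0n // ltr_wpDr // mulr_ge0 // ltW.
have [d_ge0 _ _ _] := dist_metric.
apply: (wt_le_subset d_ge0); apply/subsetP => e eI.
rewrite inE (subsetP inner_edges_sub e eI).
by case: inner_forest => _ _ /(_ e eI)[B BP eB]; apply/existsP; exists B; rewrite BP.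
Qed.

(* [block_dist] is the weight hat-w that MultiRepMFC puts on the component
   graph (see [agrees_setdist]). *)
Definition block_len (B : {set point}) : R := if B == part ord0 then 0 else w.
Definition block_dist (B C : {set point}) : R := block_len B + block_len C + L.

Lemma edge_len_gate i : edge_len (gate i) = if i == ord0 then 0 else w.
Proof. by []. Qed.

Lemma block_len_part i : block_len (part i) = edge_len (gate i).
Proof. by rewrite /block_len (inj_eq part_inj). Qed.

Lemma block_dist_sym B C : block_dist B C = block_dist C B.
Proof. by rewrite /block_dist (addrC (block_len B)). Qed.

Lemma setdist_cross i j : i != j ->
  is_setdist d (part i) (reps (part j)) (block_dist (part i) (part j)).
Proof.
move=> ij; rewrite /block_dist !block_len_part; split.
  by exists (gate i), (center j); rewrite cross_dist // !inE /= !eqxx.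
move=> a b; rewrite !inE => /eqP ai /andP[/eqP bj b2].
by rewrite -ai -bj; apply: cross_dist_ge; rewrite // ai bj.
Qed.

Definition agrees (hw : {set point} -> {set point} -> R) :=
  forall i j, i != j -> hw (part i) (part j) = block_dist (part i) (part j).

Lemma agrees_setdist hw :
  (forall B C, B \in blocks -> C \in blocks -> B != C ->
     exists r1 r2, [/\ is_setdist d B (reps C) r1, is_setdist d C (reps B) r2 &
                       hw B C = Num.min r1 r2]) -> agrees hw.
Proof.
move=> hw_min i j ij.
have [|r1 [r2 [s1 s2 ->]]] := hw_min _ _ (part_in_blocks i) (part_in_blocks j).
  by rewrite (inj_eq part_inj).
rewrite (is_setdist_uniq s1 (setdist_cross ij)).
by rewrite (is_setdist_uniq s2 (setdist_cross _)) 1?eq_sym // block_dist_sym minxx.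
Qed.

Lemma ewt_agrees hw i j : agrees hw -> i != j ->
  ewt hw [set part i; part j] = block_dist (part i) (part j).
Proof.
move=> hw_eq ij; rewrite ewt_set2 ?(inj_eq part_inj) // !hw_eq // 1?eq_sym //.
by rewrite [block_dist (part j) _]block_dist_sym; lra.
Qed.

Lemma block_dist_ge i j : i != j -> L + w <= block_dist (part i) (part j).
Proof.
rewrite /block_dist !block_len_part !edge_len_gate.
do 2 case: ifP => [/eqP->|_]; rewrite ?eqxx // => _; first by rewrite add0r addrC.
  by rewrite addr0 addrC.
by rewrite addrC lerD2r lerDl ltW.
Qed.

Definition star : {set {set {set point}}} :=
  [set [set part ord0; part i] | i in [set~ ord0]].

Lemma card_blocks : #|blocks| = n.+1.
Proof. by rewrite card_imset ?card_ord //; apply: part_inj. Qed.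

Lemma blocks_edge (e : {set {set point}}) : #|e| == 2 -> e \subset blocks ->
  exists i j, i != j /\ e = [set part i; part j].
Proof.
move=> /cards2P[B [C [BC ->]]] /subsetP sub.
have /imsetP[i _ Bi] := sub B (set21 _ _); have /imsetP[j _ Cj] := sub C (set22 _ _).
by exists i, j; rewrite Bi Cj; split=> //; apply: contraNneq BC => ij; rewrite Bi Cj ij.
Qed.

Lemma star_spanning : spanning_tree blocks star.
Proof.
apply/and3P; split.
- apply/forall_inP => e /imsetP[i]; rewrite !inE => i0 ->.
  rewrite cards2 (inj_eq part_inj) [ord0 == _]eq_sym i0 /=.
  by apply/subsetP => B /set2P[->|->]; apply: part_in_blocks.
- have to0 i : connect (adj star) (part i) (part ord0).
    have [->|i0] := eqVneq i ord0; first exact: connect0.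
    apply: connect1; rewrite /adj (inj_eq part_inj) i0 setUC.
    by apply: imset_f; rewrite !inE.
  apply/forall_inP => _ /imsetP[i _ ->]; apply/forall_inP => _ /imsetP[j _ ->].
  by apply: connect_trans (to0 i) _; rewrite (sym_connect_sym (adj_sym _)).
- apply: bridges_of_cuts => e /imsetP[i]; rewrite !inE => i0 -> x y exy.
  exists [set part i]; split.
    case: (set2_eq exy) => -[<- <-];
      by rewrite !inE !(inj_eq part_inj) eqxx [ord0 == _]eq_sym (negbTE i0).
  move=> a b ab /imsetP[k]; rewrite !inE => k0 eab ne.
  have ki : k != i by apply: contraNneq ne => ki; rewrite eab ki.
  case: (set2_eq eab) => -[-> ->];
    by rewrite !(inj_eq part_inj) (negbTE ki) eq_sym (negbTE i0).
Qed.

Lemma wt_star hw : agrees hw -> wt hw star = n%:R * (L + w).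
Proof.
move=> hw_eq; rewrite /wt big_imset => [|i j]; last first.
  rewrite !inE => i0 j0 /set2_eq[[_ /part_inj]//|[/part_inj j0' _]].
  by rewrite -j0' eqxx in j0.
rewrite (eq_bigr (fun _ => L + w)) => [|i]; last first.
  rewrite !inE => i0; rewrite ewt_agrees // 1?eq_sym //.
  rewrite /block_dist !block_len_part.
  by rewrite !edge_len_gate eqxx (negbTE i0) add0r addrC.
by rewrite sumr_const cardsC1 card_ord mulr_natl.
Qed.

Lemma spanning_wt_ge hw S : agrees hw -> spanning_tree blocks S ->
  n%:R * (L + w) <= wt hw S.
Proof.
move=> hw_eq sS; have := spanning_tree_card sS; rewrite card_blocks ltnS => cardS.
case/and3P: sS => /forall_inP edges _ _.
apply: (@le_trans _ _ (\sum_(e in S) (L + w))).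
  by rewrite sumr_const mulr_natl ler_wpMn2l // addr_ge0 // ltW.
apply: ler_sum => e /edges /andP[e2 eB].
have [i [j [ij ->]]] := blocks_edge e2 eB.
by rewrite ewt_agrees //; apply: block_dist_ge.
Qed.

(* For a star edge s = {P_0, P_i}, the pick recovers i. *)
Definition star_pair (s : {set {set point}}) : {set point} :=
  [set gate (odflt ord0 [pick i | (i != ord0) && (part i \in s)]); center ord0].

Lemma star_pairE i : i != ord0 ->
  star_pair [set part ord0; part i] = [set gate i; center ord0].
Proof.
move=> i0; rewrite /star_pair.
case: pickP => [k /andP[k0 /set2P[/part_inj|/part_inj->//]]|].
  by move=> k0'; rewrite k0' eqxx in k0.
by move/(_ i); rewrite i0 set22.
Qed.

Lemma multirep_star :
  multirep_output d blocks inner_edges reps (inner_edges :|: star_pair @: star).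
Proof.
exists block_dist, star, star_pair; split=> //.
- move=> _ _ /imsetP[i _ ->] /imsetP[j _ ->] ne.
  have ij : i != j by apply: contraNneq ne => ->.
  exists (block_dist (part i) (part j)), (block_dist (part j) (part i)).
  split; [exact: setdist_cross | by apply: setdist_cross; rewrite eq_sym |].
  by rewrite block_dist_sym minxx.
- split=> [|S sS]; first exact: star_spanning.
  by rewrite wt_star //; apply: spanning_wt_ge.
- move=> s /imsetP[i]; rewrite !inE => i0 -> B C BC e.
  have dxy : d (gate i) (center ord0) = block_dist (part i) (part ord0).
    by rewrite cross_dist // /block_dist !block_len_part.
  rewrite star_pairE //; exists (gate i), (center ord0).
  case: (set2_eq e) => -[<- <-].
    by split=> //; [right; rewrite !inE /= !eqxx | rewrite dxy block_dist_sym].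
  by split=> //; left; rewrite !inE /= !eqxx.
Qed.

Section MultiRepOutput.
Variables (hw : {set point} -> {set point} -> R) (S : {set {set {set point}}}).
Variable pr : {set {set point}} -> {set point}.
Hypothesis hw_eq : agrees hw.
Hypothesis S_spanning : spanning_tree blocks S.
Hypothesis pr_pairs : forall s, s \in S -> forall B C, B != C -> s = [set B; C] ->
  exists x y, [/\ pr s = [set x; y],
                  (x \in B /\ y \in reps C) \/ (x \in C /\ y \in reps B) &
                  d x y = hw B C].

Lemma multirep_pair s : s \in S -> exists x y,
  [/\ pr s = [set x; y], x.1 != y.1, s = [set part x.1; part y.1] &
      ewt d (pr s) = ewt hw s].
Proof.
move=> sS; case/and3P: S_spanning => /forall_inP/(_ s sS)/andP[s2 sB] _ _.
have [i [j [ij es]]] := blocks_edge s2 sB.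
have ne : part i != part j by rewrite (inj_eq part_inj).
have [x [y [prs xy dxy]]] := pr_pairs sS ne es.
have ends : (x.1 = i /\ y.1 = j) \/ (x.1 = j /\ y.1 = i).
  case: xy => -[xB yC]; [left | right]; move: xB yC;
    by rewrite !inE => /eqP-> /andP[/eqP-> _].
have x1y1 : x.1 != y.1 by case: ends => -[-> ->] //; rewrite eq_sym.
exists x, y; split=> //.
  by rewrite es; case: ends => -[-> ->] //; rewrite setUC.
rewrite prs es ewt_agrees // -hw_eq // -dxy ewt_sym_set2 //; last exact: tree_dist_sym.
by apply: contraNneq x1y1 => ->.
Qed.

Lemma wt_multirep : wt d (inner_edges :|: pr @: S) = wt d inner_edges + wt hw S.
Proof.
apply: wt_setU_imset => [s1 s2|| s /multirep_pair[x [y [_ _ _ ->]]]] //.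
  move=> /multirep_pair[x1 [y1 [p1 _ e1 _]]] /multirep_pair[x2 [y2 [p2 _ e2 _]]].
  rewrite p1 p2 e1 e2.
  by case/set2_eq=> -[-> ->] //; apply: setUC.
rewrite disjoints_subset; apply/subsetP => _ /imsetP[z zI ->]; rewrite inE.
apply/imsetP => -[s /multirep_pair[x [y [prs xy _ _]]] ez].
move/subsetP: (inner_edge_sub zI) => sub; rewrite ez prs in sub.
have := sub x (set21 _ _); have := sub y (set22 _ _); rewrite !inE => /eqP yz /eqP xz.
by rewrite xz yz eqxx in xy.
Qed.

End MultiRepOutput.

Lemma wt_multirep_output F : multirep_output d blocks inner_edges reps F ->
  wt d F = wt d inner_edges + n%:R * (L + w).
Proof.
case=> hw [S [pr [hw_min [sS S_min] pairs ->]]].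
have hw_eq := agrees_setdist hw_min.
rewrite (wt_multirep hw_eq sS pairs); congr (_ + _); apply: le_anti.
rewrite spanning_wt_ge // andbT -(wt_star hw_eq).
exact: S_min star_spanning.
Qed.

Lemma reps_part i : reps (part i) \subset part i /\ #|reps (part i)| = m.+1.
Proof.
split; first by apply/subsetP => x; rewrite inE => /andP[].
have -> : reps (part i) = [set (i, c) | c in [set~ ord0]].
  apply/setP => -[j c]; rewrite !inE /=.
  apply/andP/imsetP => [[/eqP-> c0]|[c' c0 [-> ->]]].
    by exists c; rewrite // !inE.
  by rewrite !inE in c0.
by rewrite card_imset ?cardsC1 ?card_ord // => c c' [].
Qed.

End TightInstance.

Lemma multirep_ratio (R : realFieldType) (n m : nat) (eps : R) : 0 < eps ->
  let w := eps * (2 + n%:R^-1) in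
  let A := n.+1%:R * (1 - eps + m%:R * eps) in
  A + n%:R * (1 - eps + w) =
  ((2 + m.+1%:R * eps - eps) * n.+1%:R - 1) / ((1 + eps * m.+1%:R) * n.+1%:R - eps) *
  (n%:R * w + A).
Proof.
move=> eps0 w A.
have den_gt0 : 0 < (1 + eps * m.+1%:R) * n.+1%:R - eps.
  rewrite -!natr1 (_ : _ - eps = n%:R + 1 + eps * (m%:R * n%:R + m%:R + n%:R)); last by ring.
  have : 0 <= eps * (m%:R * n%:R + m%:R + n%:R).
    by apply: mulr_ge0 (ltW eps0) _; rewrite !addr_ge0 ?mulr_ge0.
  by have := ler0n R n; lra.
rewrite {}/A {}/w; move: (lt0r_neq0 den_gt0); clear den_gt0.
case: n => [|n] den0; rewrite -!natr1 ?(mul0r, add0r, mul1r, addr0) in den0 *.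
  by field; rewrite mulr1 in den0.
by field; rewrite den0 andbT natr1 pnatr_eq0.
Qed.

Theorem theorem2 (R : realFieldType) (p l : nat) (eps : R) :
  (0 < p)%N -> (0 < l)%N -> 0 < eps -> eps < 1 ->
  exists (X : finType) (d : X -> X -> R) (P : {set {set X}})
         (Et : {set {set X}}) (Rep : {set X} -> {set X}),
    [/\ is_metric d, initial_forest P Et, gamma d P Et = 1,
        (forall B, B \in P -> Rep B \subset B /\ #|Rep B| = l) &
        exists T : {set {set X}},
          [/\ mfc_opt d Et T, is_mst d T,
              exists F, multirep_output d P Et Rep F &
              forall F, multirep_output d P Et Rep F ->
                wt d F = ((2 + l%:R * eps - eps) * p%:R - 1)
                         / ((1 + eps * l%:R) * p%:R - eps) * wt d T]].
Proof.
case: p => [//|n] _; case: l => [//|m] _ eps_gt0 eps_lt1.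
(* [n * w = (2n + 1) eps] when [n > 0]; when [n = 0] there is no gate edge and
   [0^-1 = 0] merely keeps [w] positive. *)
pose w := eps * (2 + n%:R^-1).
have w_gt0 : 0 < w by rewrite mulr_gt0 // ltr_wpDr ?invr_ge0.
have L_gt0 : 0 < 1 - eps by rewrite subr_gt0.
exists ('I_n.+1 * 'I_m.+2)%type, (tree_dist (@parent n m) (edge_len w (1 - eps) eps)).
exists (blocks n m), (inner_edges n m), (@reps n m).
split.
- exact: dist_metric.
- exact: inner_forest.
- exact: gamma_blocks.
- by move=> _ /imsetP[i _ ->]; apply: reps_part.
exists (hub_tree n m); split.
- by apply: mst_mfc_opt; [apply: hub_tree_mst | apply: inner_edges_sub].
- exact: hub_tree_mst.
- by eexists; apply: multirep_star.
- move=> F /wt_multirep_output -> //.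
  rewrite (wt_hub_tree n m w (1 - eps) eps) wt_inner_edges.
  exact: multirep_ratio.
Qed.
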